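(* Let $I$ be a nearly complete intersection in $R=k[x_1,\dots,x_n]$, let $h$ be a minimal monomial generator of $I$ of degree at least $3$, and let $K$ be the ideal generated by the remaining minimal monomial generators of $I$, so $I=(h)+K$. Then $(h)\cap K=hJ$ for some ideal $J$ that is a complete intersection.
   Context: $k$ is a field. A nearly complete intersection is a squarefree monomial ideal $I$ that is not a complete intersection such that for every variable $x$ dividing some generator of $I$, the ideal $I(x=1)$ obtained by substituting $x=1$ in the generators is a complete intersection. *)

From HB Require Import structures.
From mathcomp Require Import all_boot all_order all_algebra.
From mathcomp Require Import mpoly.
Set Implicit Arguments. Unset Strict Implicit. Unset Printing Implicit Defensive.
Import GRing.Theory.
Local Open Scope ring_scope.

Section Defs.
Variables (k : fieldType) (n : nat).
Local Notation R := {mpoly k[n]}.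

Definition ideal_of (s : seq R) : R -> Prop :=
  fun p => exists c : 'I_(size s) -> R, p = \sum_(i < size s) c i * s`_i.

Definition is_ideal (J : R -> Prop) : Prop :=
  [/\ J 0, (forall a b, J a -> J b -> J (a + b)) & (forall r a, J a -> J (r * a))].

Definition nzd_mod (J : R -> Prop) (a : R) : Prop :=
  forall b, J (a * b) -> J b.

Definition regular_seq (s : seq R) : Prop :=
  forall i, (i < size s)%N -> nzd_mod (ideal_of (take i s)) s`_i.

Definition complete_intersection (J : R -> Prop) : Prop :=
  exists s : seq R, regular_seq s /\ forall p, J p <-> ideal_of s p.

Definition mono (S : {set 'I_n}) : R := \prod_(i in S) 'X_i.

(* For a list G of squarefree monomials (given by their supports), the ideal
   generated by G is a nearly complete intersection: it is not a complete
   intersection, and for every variable x_j dividing some generator, the ideal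
   obtained by substituting x_j = 1 in the generators is a complete
   intersection. *)
Definition nearly_ci (G : seq {set 'I_n}) : Prop :=
  ~ complete_intersection (ideal_of (map mono G)) /\
  forall j : 'I_n, (exists2 S, S \in G & j \in S) ->
    complete_intersection (ideal_of (map (fun S => mono (S :\ j)) G)).

End Defs.

From Pilot Require Import Defs.
From HB Require Import structures.
From mathcomp Require Import all_boot all_order all_algebra.
From mathcomp Require Import mpoly.
Set Implicit Arguments. Unset Strict Implicit. Unset Printing Implicit Defensive.
Import GRing.Theory.
Local Open Scope ring_scope.

(* Write h = x^S.  Then (h) ∩ K = h (K : h), and K : h is generated by the
   monomials x^(A :\: S) for the other generators x^A; pairwise coprime
   monomials form a regular sequence, so it suffices that the minimal supports
   A :\: S be pairwise disjoint.

   The minimal generators of a monomial complete intersection are pairwise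
   coprime.  Suppose x^U and x^W share a variable, and write the generators in
   terms of a regular sequence and back with matrices F and E.  Comparing
   coefficients, the constant terms of F E form the identity, so there are no
   more generators than elements of the sequence.  At the 0/1-point v
   supported on W :\: U the whole ideal vanishes, hence so do the coefficients
   of syzygies of the regular sequence; this gives E(v) F(v) = 1, so F(v) has
   full row rank.  But the syzygy x^(W :\: U) x^U = x^(U :\: W) x^W makes the
   row of U in F(v) vanish.

   Applied to I(x_j = 1) for j in S, the minimal elements of the supports
   A :\ j are pairwise disjoint.  A minimal support X = A :\: S of K : h stays
   minimal among them for every j in S except at most one (the element of
   S :\: A when it is a singleton).  As #|S| >= 3, two minimal supports share
   such a j, and are thus disjoint. *)

Lemma exists_coef_matrix (R : pzSemiRingType) m m' (g : 'I_m -> R) (h : 'I_m' -> R) :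
  (forall i, exists c : 'I_m' -> R, g i = \sum_j c j * h j) ->
  exists M : 'M[R]_(m, m'), forall i, g i = \sum_j M i j * h j.
Proof.
move=> /fin_all_exists [c gE]; exists (\matrix_(i, j) c i j) => i.
by rewrite gE; apply: eq_bigr => j _; rewrite mxE.
Qed.

Section Ideals.
Variables (k : fieldType) (n : nat).
Local Notation R := {mpoly k[n]}.
Implicit Types (s : seq R) (J : R -> Prop).

Lemma is_idealN J a : is_ideal J -> J a -> J (- a).
Proof. by case=> _ _ JM Ja; rewrite -mulN1r; apply: JM. Qed.

Lemma is_idealB J a b : is_ideal J -> J a -> J b -> J (a - b).
Proof. by move=> hJ Ja Jb; case: (hJ) => _ JD _; apply: JD => //; apply: is_idealN. Qed.

Lemma vanishing_is_ideal (v : 'I_n -> k) : is_ideal (fun p : R => p.@[v] = 0).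
Proof.
rewrite /is_ideal; split=> [|a b|c a]; first exact: meval0.
  by rewrite mevalD => -> ->; rewrite addr0.
by rewrite mevalM => ->; rewrite mulr0.
Qed.

(* Coefficients indexed by [nat] rather than by ordinals make induction on [m]
   painless. *)
Definition ideal_take s m (p : R) :=
  exists c : nat -> R, p = \sum_(i < m) c i * s`_i.

Lemma ideal_takeE s m p :
  (m <= size s)%N -> ideal_of (take m s) p <-> ideal_take s m p.
Proof.
move=> le_ms; rewrite /ideal_of size_take_min (minn_idPl le_ms).
split=> -[c ->].
  exists (fun i => if insub i is Some j then c j else 0).
  by apply: eq_bigr => i _; rewrite valK nth_take.
by exists (fun i => c i); apply: eq_bigr => i _; rewrite nth_take.
Qed.

Lemma ideal_ofE s p : ideal_of s p <-> ideal_take s (size s) p.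
Proof. by rewrite -ideal_takeE // take_size. Qed.

Lemma ideal_take_is_ideal s m : is_ideal (ideal_take s m).
Proof.
split=> [|a b [c ->] [d ->]|r a [c ->]].
- by exists (fun=> 0); rewrite big1 // => i _; rewrite mul0r.
- by exists (fun i => c i + d i); rewrite -big_split; apply: eq_bigr => i _; rewrite mulrDl.
- by exists (fun i => r * c i); rewrite mulr_sumr; apply: eq_bigr => i _; rewrite mulrA.
Qed.

Lemma ideal_take_nth s m i : (i < m)%N -> ideal_take s m s`_i.
Proof.
move=> lt_im; exists (fun j => (j == i)%:R).
rewrite (bigD1 (Ordinal lt_im)) //= eqxx mul1r big1 ?addr0 // => j ne_ji.
by move: ne_ji; rewrite -val_eqE /= => /negbTE ->; rewrite mul0r.
Qed.

Lemma ideal_take_widen s m1 m2 p :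
  (m1 <= m2)%N -> ideal_take s m1 p -> ideal_take s m2 p.
Proof.
move=> le_m12 [c ->]; exists (fun i => if (i < m1)%N then c i else 0).
rewrite -(subnKC le_m12) big_split_ord /= [X in _ + X]big1 ?addr0.
  by apply: eq_bigr => i _; rewrite ltn_ord.
by move=> i _; rewrite ltnNge leq_addr mul0r.
Qed.

Lemma ideal_take_min s m J :
  is_ideal J -> (forall i, (i < m)%N -> J s`_i) -> forall p, ideal_take s m p -> J p.
Proof.
by case=> J0 JD JM Js p [c ->]; elim/big_ind: _ => // i _; apply/JM/Js.
Qed.

Lemma ideal_of_is_ideal s : is_ideal (ideal_of s).
Proof.
have [J0 JD JM] := ideal_take_is_ideal s (size s).
by split=> [|a b|r a]; rewrite ?ideal_ofE; [exact: J0 | exact: JD | exact: JM].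
Qed.

Lemma ideal_of_nth s i : (i < size s)%N -> ideal_of s s`_i.
Proof. by move=> lt_is; apply/ideal_ofE/ideal_take_nth. Qed.

Lemma ideal_of_min s J :
  is_ideal J -> (forall i, (i < size s)%N -> J s`_i) -> forall p, ideal_of s p -> J p.
Proof. by move=> hJ Js p /ideal_ofE; apply: ideal_take_min. Qed.

Lemma ideal_of_seq1P (h p : R) : ideal_of [:: h] p <-> exists c, p = c * h.
Proof.
split=> [[c ->]|[c ->]]; first by exists (c ord0); rewrite big_ord1.
by exists (fun=> c); rewrite big_ord1.
Qed.

Lemma complete_intersection_ext J J' :
  (forall p, J p <-> J' p) -> complete_intersection J -> complete_intersection J'.
Proof. by move=> eJ [s [hs Js]]; exists s; split=> // p; rewrite -eJ. Qed.

(* Induction on [m]: regularity puts [c m] in the ideal of the earlier [s_i],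
   and absorbing it into their coefficients leaves a shorter syzygy. *)
Lemma regular_syzygy s m (c : nat -> R) :
  regular_seq s -> (m <= size s)%N -> \sum_(i < m) c i * s`_i = 0 ->
  forall i, (i < m)%N -> ideal_take s m (c i).
Proof.
move=> reg_s; elim: m c => [//|m IHm] c lt_ms; rewrite big_ord_recr /= => syz.
have le_ms := ltnW lt_ms; have [_ _ JM] := ideal_take_is_ideal s m.+1.
have cm_in : ideal_take s m (c m).
  apply/(ideal_takeE _ le_ms)/(reg_s m lt_ms)/(ideal_takeE _ le_ms).
  rewrite mulrC -(addr0_eq syz); apply: is_idealN (ideal_take_is_ideal s m) _.
  by exists c.
have [d cmE] := cm_in.
have syz' : \sum_(i < m) (c i + d i * s`_m) * s`_i = 0.
  under eq_bigr do rewrite mulrDl mulrAC.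
  by rewrite big_split /= -mulr_suml -cmE.
move=> i; rewrite ltnS leq_eqVlt => /predU1P [->|lt_im].
  exact: ideal_take_widen (leqnSn m) cm_in.
rewrite -[c i](addrK (d i * s`_m)); apply: (is_idealB (ideal_take_is_ideal s m.+1)).
  exact: ideal_take_widen (leqnSn m) (IHm (fun j => c j + d j * s`_m) le_ms syz' i lt_im).
by apply/JM/ideal_take_nth.
Qed.

Lemma regular_syzygy_eval s (v : 'I_n -> k) (c : 'I_(size s) -> R) :
  regular_seq s -> (forall i, (i < size s)%N -> (s`_i).@[v] = 0) ->
  \sum_i c i * s`_i = 0 -> forall i, (c i).@[v] = 0.
Proof.
move=> reg_s sv syz i.
pose c' j := if insub j is Some j' then c j' else 0.
have syz' : \sum_(j < size s) c' j * s`_j = 0.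
  by rewrite -[RHS]syz; apply: eq_bigr => j _; rewrite /c' valK.
have := regular_syzygy reg_s (leqnn _) syz' (ltn_ord i).
by rewrite /c' valK; apply: (ideal_take_min (vanishing_is_ideal v) sv).
Qed.

End Ideals.

Section MinimalSets.
Variable n : nat.
Implicit Types (U V : {set 'I_n}) (F : seq {set 'I_n}).

Definition minimal F U : bool :=
  (U \in F) && all (fun V => (V \subset U) ==> (V == U)) F.

Lemma minimalP F U :
  reflect (U \in F /\ forall V, V \in F -> V \subset U -> V = U) (minimal F U).
Proof.
apply: (iffP andP) => -[UF minU]; split=> //.
  by move=> V VF sVU; apply/eqP; move/allP: minU => /(_ V VF); rewrite sVU.
by apply/allP => V VF; apply/implyP => /(minU V VF) ->.
Qed.

Lemma exists_minimal F U : U \in F -> exists2 V, minimal F V & V \subset U.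
Proof.
move: {2}#|U|.+1 (ltnSn #|U|) => c; elim: c U => // c IHc U ltUc UF.
have [minU|] := boolP (minimal F U); first by exists U.
rewrite /minimal UF /= => /allPn [V VF]; rewrite negb_imply => /andP [sVU neVU].
have pVU : V \proper U by rewrite properEneq neVU.
have [W minW sWV] := IHc V (leq_trans (proper_card pVU) ltUc) VF.
by exists W => //; apply: subset_trans sWV sVU.
Qed.

Definition minimals F := undup (filter (minimal F) F).

Lemma minimals_uniq F : uniq (minimals F).
Proof. exact: undup_uniq. Qed.

Lemma mem_minimals F U : (U \in minimals F) = minimal F U.
Proof. by rewrite mem_undup mem_filter andb_idr // => /andP []. Qed.

Lemma minimals_antichain F : {in minimals F &, forall U V, U \subset V -> U = V}.
Proof.
move=> U V; rewrite !mem_minimals => /andP [UF _] /minimalP [_ minV] sUV.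
exact: minV.
Qed.

End MinimalSets.

Section Monomials.
Variables (k : fieldType) (n : nat).
Local Notation R := {mpoly k[n]}.
Local Notation mono := (@mono k n).
Implicit Types (A B U : {set 'I_n}) (L F : seq {set 'I_n}) (p q : R).

Definition mset U : 'X_{1..n} := [multinom (i \in U : nat) | i < n].

Lemma msetE U i : mset U i = (i \in U).
Proof. by rewrite mnmE. Qed.

Lemma monoE U : mono U = 'X_[mset U].
Proof.
rewrite /Defs.mono mprodXE; congr 'X_[_]; apply/mnmP => j.
rewrite mnm_sumE msetE (eq_bigr (fun i => (i == j) : nat)) => [|i _]; last by rewrite mnm1E.
case: (boolP (j \in U)) => [jU|jNU].
  by rewrite (bigD1 j) //= eqxx big1 // => i /andP [_ /negbTE ->].
by rewrite big1 // => i iU; case: eqP iU => // ->; rewrite (negbTE jNU).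
Qed.

Lemma mset_leP U (m : 'X_{1..n}) : reflect {in U, forall i, 0 < m i}%N (mset U <= m)%MM.
Proof.
apply: (iffP mnm_lepP) => le_Um i; rewrite ?msetE.
  by move=> iU; have := le_Um i; rewrite msetE iU.
by case: (boolP (i \in U)) => // /le_Um.
Qed.

Lemma mset_le A B : (mset A <= mset B)%MM = (A \subset B).
Proof.
apply/mset_leP/subsetP => sAB i /sAB; last by rewrite msetE => ->.
by rewrite msetE lt0b.
Qed.

Lemma mset_inj : injective mset.
Proof. by move=> A B eAB; apply/eqP; rewrite eqEsubset -!mset_le eAB lepm_refl. Qed.

Lemma msetU A B : [disjoint A & B] -> mset (A :|: B) = (mset A + mset B)%MM.
Proof.
move=> dAB; apply/mnmP => i; rewrite mnmDE !msetE inE.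
by case: (boolP (i \in A)) => //= /(disjointFr dAB) ->.
Qed.

Lemma monoU A B : [disjoint A & B] -> mono (A :|: B) = mono A * mono B.
Proof. by move=> dAB; rewrite !monoE msetU // mpolyXD. Qed.

Lemma mono_lcm A B : mono A * mono (B :\: A) = mono B * mono (A :\: B).
Proof.
have dD (C D : {set 'I_n}) : [disjoint C & D :\: C].
  by rewrite -setI_eq0; apply/eqP/setP => x; rewrite !inE; case: (x \in C).
have eU (C D : {set 'I_n}) : C :|: D :\: C = C :|: D.
  by apply/setP => x; rewrite !inE; case: (x \in C).
by rewrite -!monoU // !eU setUC.
Qed.

Lemma meval_mono_indicator A (T : {set 'I_n}) :
  (mono A).@[fun i => (i \in T)%:R] = (A \subset T)%:R.
Proof.
rewrite rmorph_prod (eq_bigr (fun i => (i \in T)%:R)) => [|i _]; last exact: mevalXU.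
have [sAT|/subsetPn [x xA xNT]] := boolP (A \subset T).
  by rewrite big1 // => i /(subsetP sAT) ->.
by rewrite (bigD1 x) //= (negbTE xNT) mul0r.
Qed.

Lemma mcoeffMXE p m m' :
  (p * 'X_[m])@_m' = if (m <= m')%MM then p@_(m' - m) else 0.
Proof.
case: ifP => [le_mm'|Nle_mm']; first by rewrite -{1}(submK le_mm') addmC mcoeffMX.
apply/eqP; rewrite mcoeff_eq0 (perm_mem (msuppMX p m)); apply/mapP => -[m'' _ em'].
by rewrite em' lem_addr in Nle_mm'.
Qed.

Lemma mcoeff_monoM U p m : (mono U * p)@_(mset U + m) = p@_m.
Proof. by rewrite mulrC monoE mcoeffMX. Qed.

Definition mono_ideal L p :=
  forall m, m \in msupp p -> exists2 U, U \in L & (mset U <= m)%MM.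

Lemma mono_ideal_is_ideal L : is_ideal (mono_ideal L).
Proof.
split=> [m|a b Ia Ib m /msuppD_le|c a Ia m /msuppM_le /allpairsP [[m1 m2] /= [_ m2a ->]]].
- by rewrite msupp0.
- by rewrite mem_cat => /orP [/Ia|/Ib].
- have [U UL le_Um2] := Ia _ m2a; exists U => //.
  exact: lepm_trans le_Um2 (lem_addl _ _).
Qed.

Lemma mono_ideal_mono L U : U \in L -> mono_ideal L (mono U).
Proof. by move=> UL m; rewrite monoE msuppX inE => /eqP ->; exists U; rewrite ?lepm_refl. Qed.

Lemma mono_idealP L p : ideal_of (map mono L) p <-> mono_ideal L p.
Proof.
split.
  apply: (ideal_of_min (mono_ideal_is_ideal L)) => i; rewrite size_map => ltiL.
  by rewrite (nth_map set0) //; apply/mono_ideal_mono/mem_nth.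
move=> Ip; rewrite [p]mpolyE big_seq; have [I0 ID IM] := ideal_of_is_ideal (map mono L).
elim/big_ind: _ => // m /Ip [U UL le_Um].
rewrite -(submK le_Um) mpolyXD -monoE scalerAl.
apply: IM; rewrite -(nth_index set0 UL) -(nth_map set0 0) ?index_mem //.
by apply: ideal_of_nth; rewrite size_map index_mem.
Qed.

Lemma ideal_of_monoE L p : ideal_of (map mono L) p <->
  exists c : 'I_(size L) -> R, p = \sum_i c i * mono (nth set0 L i).
Proof.
rewrite ideal_ofE; split=> -[c ->].
  by exists (fun i => c i); rewrite size_map; apply: eq_bigr => i _; rewrite (nth_map set0).
exists (fun i => if insub i is Some j then c j else 0); rewrite size_map.
by apply: eq_bigr => i _; rewrite valK (nth_map set0).
Qed.

Lemma mono_ideal_cap S L p :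
  ideal_of [:: mono S] p /\ ideal_of (map mono L) p <->
  exists2 q, mono_ideal [seq A :\: S | A <- L] q & p = mono S * q.
Proof.
rewrite ideal_of_seq1P mono_idealP; split=> [[[q ->] Iq]|[q Iq ->]]; last first.
  split; first by exists q; rewrite mulrC.
  move=> m; rewrite monoE mulrC mcoeff_msupp mcoeffMXE.
  case: ifP => [le_Sm|]; last by rewrite eqxx.
  rewrite -mcoeff_msupp => /Iq [_ /mapP [A AL ->] le_ASm].
  exists A => //; apply/mset_leP => i iA; rewrite -(submK le_Sm) mnmDE msetE.
  case: (boolP (i \in S)) => [|iNS]; first by rewrite addn1.
  by move/mset_leP: le_ASm => /(_ i); rewrite inE iNS iA addn0 => ->.
exists q; last by rewrite mulrC.
move=> m; rewrite mcoeff_msupp -(mcoeff_monoM S) -mcoeff_msupp mulrC => /Iq [A AL le_Am].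
exists (A :\: S); first exact: map_f.
apply/mset_leP => i; rewrite inE => /andP [iNS iA].
by move/mset_leP: le_Am => /(_ i iA); rewrite mnmDE msetE (negbTE iNS).
Qed.

(* If [mono U * b] lies in the ideal of the earlier generators, so does [b]:
   each generator dividing a monomial of [mono U * b] is coprime to [mono U]. *)
Lemma disjoint_regular_seq L :
  uniq L -> {in L &, forall U W, U != W -> [disjoint U & W]} ->
  regular_seq (map mono L).
Proof.
move=> uL dL i; rewrite size_map => ltiL b.
rewrite -map_take (nth_map set0) // !mono_idealP; set U := nth set0 L i.
move=> Ib m m_b.
have /Ib [V VL le_Vm] : (mset U + m)%MM \in msupp (mono U * b).
  by rewrite mcoeff_msupp mcoeff_monoM -mcoeff_msupp.
have UNV : U != V.
  have U_drop : U \in drop i L.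
    by have := @mem_nth _ set0 (drop i L) 0; rewrite nth_drop addn0 size_drop subn_gt0; apply.
  have : uniq (take i L ++ drop i L) by rewrite cat_take_drop.
  rewrite cat_uniq => /and3P [_ /hasPn /(_ U U_drop) UNtake _].
  by apply: contraNneq UNtake => ->.
exists V => //; apply/mset_leP => j jV; move/mset_leP: le_Vm => /(_ j jV).
rewrite mnmDE msetE; case: (boolP (j \in U)) => //= jU.
by rewrite (disjointFr (dL _ _ (mem_nth set0 ltiL) (mem_take VL) UNV) jU) in jV.
Qed.

Lemma disjoint_complete_intersection L :
  uniq L -> {in L &, forall U W, U != W -> [disjoint U & W]} ->
  complete_intersection (ideal_of (map mono L)).
Proof. by move=> uL dL; exists (map mono L); split=> //; apply: disjoint_regular_seq. Qed.

Lemma mono_ideal_minimals F p :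
  mono_ideal F p <-> mono_ideal (minimals F) p.
Proof.
split=> Ip m /Ip [U UF le_Um]; last by exists U; rewrite // mem_minimals in UF; case/andP: UF.
have [V minV sVU] := exists_minimal UF; exists V; first by rewrite mem_minimals.
by apply: lepm_trans le_Um; rewrite mset_le.
Qed.

Lemma ideal_of_minimals F p :
  ideal_of (map mono F) p <-> ideal_of (map mono (minimals F)) p.
Proof. by rewrite !mono_idealP mono_ideal_minimals. Qed.

End Monomials.

Section CompleteIntersectionMatrices.
Variables (k : fieldType) (n : nat).
Local Notation R := {mpoly k[n]}.
Local Notation mono := (@mono k n).
Variables (L : seq {set 'I_n}) (s : seq R).
Hypotheses (uL : uniq L) (antiL : {in L &, forall A B : {set 'I_n}, A \subset B -> A = B}).
Hypothesis reg_s : regular_seq s.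
Local Notation N := (size L).
Local Notation r := (size s).
Local Notation L_ a := (nth set0 L a).

Variables (F : 'M[R]_(N, r)) (E : 'M[R]_(r, N)).
Hypothesis monoFs : forall a : 'I_N, mono (L_ a) = \sum_l F a l * s`_l.
Hypothesis sEmono : forall l : 'I_r, s`_l = \sum_a E l a * mono (L_ a).

Lemma mcoeff_mono_comb (c : 'I_N -> R) (b : 'I_N) :
  (\sum_a c a * mono (L_ a))@_(mset (L_ b)) = (c b)@_0.
Proof.
rewrite raddf_sum (bigD1 b) //= big1 ?addr0 => [|a neab].
  by rewrite monoE mcoeffMXE lepm_refl; congr _@__; apply/mnmP => i; rewrite mnmBE subnn mnm0E.
rewrite monoE mcoeffMXE mset_le; case: ifP => // sab; case/eqP: neab; apply/val_inj.
apply/eqP; rewrite -(nth_uniq set0 (ltn_ord a) (ltn_ord b) uL).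
by apply/eqP/antiL; rewrite ?mem_nth.
Qed.

Lemma mono_FE (a : 'I_N) : mono (L_ a) = \sum_b (F *m E) a b * mono (L_ b).
Proof.
under eq_bigr do rewrite mxE mulr_suml.
rewrite exchange_big monoFs; apply: eq_bigr => l _.
by rewrite sEmono mulr_sumr; apply: eq_bigr => b _; rewrite mulrA.
Qed.

Lemma mcoeff0_FE : map_mx (mcoeff 0) (F *m E) = 1%:M.
Proof.
apply/matrixP => a b; rewrite mxE [RHS]mxE -(mcoeff_mono_comb ((F *m E) a)) -mono_FE.
by rewrite monoE mcoeffX (inj_eq (@mset_inj n)) (nth_uniq set0 (ltn_ord a) (ltn_ord b) uL).
Qed.

Lemma size_gens_le : (N <= r)%N.
Proof.
rewrite -(mxrank1 k N) -mcoeff0_FE map_mxM.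
exact: leq_trans (mxrankM_maxl _ _) (rank_leq_col _).
Qed.

Variable v : 'I_n -> k.
Hypothesis s_v : forall i, (i < r)%N -> (s`_i).@[v] = 0.

Lemma meval_EF : map_mx (meval v) (E *m F) = 1%:M.
Proof.
apply/matrixP => i j; rewrite mxE [RHS]mxE.
pose c l := (E *m F) i l - (i == l)%:R.
suff /eqP : (c j).@[v] = 0 by rewrite rmorphB /= rmorph_nat subr_eq0 => /eqP.
apply: (regular_syzygy_eval reg_s s_v (c := c)).
under eq_bigr do rewrite mulrBl mxE mulr_suml.
rewrite sumrB exchange_big /=.
have -> : \sum_(l < r) (i == l)%:R * s`_l = s`_i.
  rewrite (bigD1 i) //= eqxx mul1r big1 ?addr0 // => l.
  by rewrite eq_sym => /negbTE ->; rewrite mul0r.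
rewrite sEmono; apply/eqP; rewrite subr_eq0; apply/eqP/eq_bigr => a _.
by rewrite monoFs mulr_sumr; apply: eq_bigr => l _; rewrite mulrA.
Qed.

Lemma meval_F_row_free : row_free (map_mx (meval v) F).
Proof.
rewrite /row_free eqn_leq rank_leq_row; apply: leq_trans size_gens_le _.
by rewrite -{1}(mxrank1 k r) -meval_EF map_mxM; apply: mxrankM_maxr.
Qed.

Lemma meval_F_row_neq0 (a : 'I_N) : ~ (forall l, (F a l).@[v] = 0).
Proof.
move=> Fa0; have [B FB] := row_freeP meval_F_row_free.
have /matrixP /(_ a a) := FB; rewrite !mxE eqxx big1 => [/eqP|l _].
  by rewrite eq_sym oner_eq0.
by rewrite mxE Fa0 mul0r.
Qed.

Lemma meval_F_lcm (a b : 'I_N) (l : 'I_r) :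
  (F a l * mono (L_ b :\: L_ a) - F b l * mono (L_ a :\: L_ b)).@[v] = 0.
Proof.
apply: (regular_syzygy_eval reg_s s_v
  (c := fun l => F a l * mono (L_ b :\: L_ a) - F b l * mono (L_ a :\: L_ b))).
under eq_bigr do rewrite mulrBl mulrAC [F b _ * _ * _]mulrAC.
by rewrite sumrB -!mulr_suml -!monoFs mono_lcm subrr.
Qed.

End CompleteIntersectionMatrices.

Section CompleteIntersectionDisjoint.
Variables (k : fieldType) (n : nat).
Local Notation mono := (@mono k n).

Lemma complete_intersection_disjoint (L : seq {set 'I_n}) :
  uniq L -> {in L &, forall A B : {set 'I_n}, A \subset B -> A = B} ->
  complete_intersection (ideal_of (map mono L)) ->
  {in L &, forall U W : {set 'I_n}, U != W -> [disjoint U & W]}.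
Proof.
move=> uL antiL [s [reg_s Is]] U W /(nthP set0) [a ltaL <-] /(nthP set0) [b ltbL <-].
set A := nth set0 L a; set B := nth set0 L b => neAB.
have [//|meetAB] := boolP [disjoint A & B]; exfalso.
have [F monoFs] : exists F : 'M_(size L, size s),
    forall i : 'I_(size L), mono (nth set0 L i) = \sum_l F i l * s`_l.
  apply: exists_coef_matrix => i; apply/Is.
  by rewrite -(nth_map _ 0) //; apply: ideal_of_nth; rewrite size_map.
have [E sEmono] : exists E : 'M_(size s, size L),
    forall l : 'I_(size s), s`_l = \sum_i E l i * mono (nth set0 L i).
  by apply: exists_coef_matrix => l; apply/ideal_of_monoE/Is/ideal_of_nth.
(* [v] kills every generator: none lies in [B :\: A], as [A] and [B] meet. *)
pose v i : k := (i \in B :\: A)%:R.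
have s_v i : (i < size s)%N -> (s`_i).@[v] = 0.
  move=> /ideal_of_nth /Is; apply: (ideal_of_min (vanishing_is_ideal v)) => c.
  rewrite size_map => ltcL; rewrite (nth_map set0) // meval_mono_indicator.
  case: (boolP (_ \subset _)) => // sCBA; move: meetAB.
  have sCB := subset_trans sCBA (subsetDl B A).
  rewrite (antiL _ _ (mem_nth _ ltcL) (mem_nth _ ltbL) sCB) in sCBA.
  by rewrite disjoint_sym disjoints_subset (subset_trans sCBA) // setDE subsetIr.
apply: (meval_F_row_neq0 uL antiL reg_s monoFs sEmono s_v (a := Ordinal ltaL)) => l.
have := meval_F_lcm reg_s monoFs s_v (Ordinal ltaL) (Ordinal ltbL) l.
rewrite rmorphB !rmorphM /= !meval_mono_indicator subxx.
have /subsetPn [x xA xNB] : ~~ (A \subset B).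
  by apply: contra neAB => sAB; apply/eqP/antiL; rewrite ?mem_nth.
have /negbTE -> : ~~ (A :\: B \subset B :\: A).
  by apply/subsetPn; exists x; rewrite !inE ?xA ?andbF ?(negbTE xNB).
by rewrite mulr1 mulr0 subr0.
Qed.

Lemma complete_intersection_minimal_disjoint (F : seq {set 'I_n}) :
  complete_intersection (ideal_of (map mono F)) ->
  forall U W, minimal F U -> minimal F W -> U != W -> [disjoint U & W].
Proof.
move=> ciF U W; rewrite -!mem_minimals; apply: complete_intersection_disjoint.
- exact: minimals_uniq.
- exact: minimals_antichain.
- by apply: complete_intersection_ext ciF => p; apply: ideal_of_minimals.
Qed.

End CompleteIntersectionDisjoint.

Section ColonGenerators.
Variables (n : nat) (G : seq {set 'I_n}) (S : {set 'I_n}).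
Hypotheses (uG : uniq G) (antiG : {in G &, forall A B : {set 'I_n}, A \subset B -> A = B}).
Hypothesis SG : S \in G.

Definition subst1 j := [seq A :\ j | A <- G].

Definition colon_gens := [seq A :\: S | A <- rem S G].

Lemma colon_gensP X :
  reflect (exists2 A, A \in G & A != S /\ X = A :\: S) (X \in colon_gens).
Proof.
apply: (iffP mapP) => -[A]; rewrite ?mem_rem_uniq // ?inE.
  by case/andP => neAS AG ->; exists A.
by move=> AG [neAS ->]; exists A; rewrite // mem_rem_uniq // inE neAS.
Qed.

Lemma mem_colon_gens A : A \in G -> A != S -> A :\: S \in colon_gens.
Proof. by move=> AG neAS; apply/colon_gensP; exists A. Qed.

Lemma subset_setDS1 A j : j \in S -> A :\: S \subset A :\ j.
Proof. by move=> jS; apply: setDS; rewrite sub1set. Qed.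

Lemma minimal_subst1_S j : j \in S -> minimal (subst1 j) (S :\ j).
Proof.
move=> jS; apply/minimalP; split=> [|_ /mapP [A AG ->] sAS]; first exact: map_f.
suff sAS' : A \subset S by rewrite (antiG AG SG sAS').
apply/subsetP => x xA; have [-> //|nexj] := eqVneq x j.
by have := subsetP sAS x; rewrite !inE nexj xA => /(_ isT) /andP [].
Qed.

Lemma minimal_colon_subst1 X j :
  j \in S -> (1 < #|S|)%N -> minimal colon_gens X -> X \in subst1 j ->
  minimal (subst1 j) X.
Proof.
move=> jS S2 /minimalP [/colon_gensP [A AG [_ eX]] minX] Xj; apply/minimalP.
split=> // _ /mapP [D DG ->] sDX.
have /card_gt0P [x /setD1P [nexj xS]] : (0 < #|S :\ j|)%N.
  by move: S2; rewrite (cardsD1 j) jS.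
have neDS : D != S.
  apply: contraTneq sDX => ->; apply/subsetPn; exists x; first by rewrite !inE nexj.
  by rewrite eX inE xS.
have eDS := minX _ (mem_colon_gens DG neDS) (subset_trans (subset_setDS1 D jS) sDX).
by apply/eqP; rewrite eqEsubset sDX -eDS subset_setDS1.
Qed.

Hypothesis subst1_disjoint : forall j, j \in S ->
  forall U W, minimal (subst1 j) U -> minimal (subst1 j) W -> U != W -> [disjoint U & W].

Lemma minimal_colon_mem_subst1 X A i j :
  minimal colon_gens X -> A \in G -> X = A :\: S ->
  i \in S :\: A -> j \in S -> i != j -> X \in subst1 j.
Proof.
move=> /minimalP [_ minX] AG eX /setDP [iS iNA] jS neij.
have [Z /[dup] minZ /minimalP [/mapP [D DG eZ] _] sZA] :=
  exists_minimal (map_f (fun A => A :\ j) AG).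
have neZS : Z != S :\ j.
  apply: contraNneq iNA => eZS; have := subsetP sZA i.
  by rewrite eZS !inE neij iS => /(_ isT).
have dZS := subst1_disjoint jS minZ (minimal_subst1_S jS) neZS.
have sZX : Z \subset X.
  apply/subsetP => y yZ; have /setD1P [neyj yA] := subsetP sZA y yZ.
  by rewrite eX inE yA andbT; apply: contraTN yZ => yS; rewrite (disjointFl dZS) // !inE neyj.
have neDS : D != S by apply: contraNneq neZS => eDS; rewrite eZ eDS.
have sDSZ : D :\: S \subset Z by rewrite eZ subset_setDS1.
have eDS := minX _ (mem_colon_gens DG neDS) (subset_trans sDSZ sZX).
suff <- : Z = X by rewrite eZ; apply: map_f.
by apply/eqP; rewrite eqEsubset sZX -eDS.
Qed.

Lemma card_subst1_exceptions X :
  minimal colon_gens X -> (#|[set j in S | X \notin subst1 j]| <= 1)%N.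
Proof.
move=> minX; have /minimalP [/colon_gensP [A AG [neAS eX]] _] := minX.
have /subsetPn [i iS iNA] : ~~ (S \subset A).
  by apply: contraNN neAS => sSA; rewrite (antiG SG AG sSA).
rewrite -(cards1 i); apply/subset_leq_card/subsetP => j; rewrite !inE => /andP [jS].
apply: contraNT => neji; apply: (minimal_colon_mem_subst1 (i := i) minX AG eX _ jS).
  by rewrite inE iS iNA.
by rewrite eq_sym.
Qed.

Lemma colon_minimal_disjoint : (2 < #|S|)%N ->
  {in minimals colon_gens &, forall X Y : {set 'I_n}, X != Y -> [disjoint X & Y]}.
Proof.
move=> S3 X Y; rewrite !mem_minimals => minX minY neXY.
set bad := [set j in S | X \notin subst1 j] :|: [set j in S | Y \notin subst1 j].
have /subsetPn [j jS jNbad] : ~~ (S \subset bad).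
  apply: contraTN S3 => /subset_leq_card leSbad; rewrite -leqNgt.
  apply: leq_trans leSbad (leq_trans (leq_card_setU _ _) _).
  exact: leq_add (card_subst1_exceptions minX) (card_subst1_exceptions minY).
move: jNbad; rewrite !inE jS /= negb_or !negbK => /andP [Xj Yj].
apply: (subst1_disjoint jS) neXY; apply: minimal_colon_subst1 => //;
  exact: ltnW.
Qed.

End ColonGenerators.

Theorem theorem4p4 (k : fieldType) (n : nat) (G : seq {set 'I_n})
    (S : {set 'I_n}) :
  uniq G ->
  (forall A B, A \in G -> B \in G -> A \subset B -> A = B) ->
  @nearly_ci k n G ->
  S \in G -> (3 <= #|S|)%N ->
  exists J : {mpoly k[n]} -> Prop,
    [/\ is_ideal J, complete_intersection J &
        forall p : {mpoly k[n]},
          (ideal_of [:: @mono k n S] p /\ ideal_of (map (@mono k n) (rem S G)) p) <->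
          (exists2 q, J q & p = @mono k n S * q)].
Proof.
move=> uG antiG [_ ci_subst1] SG S3.
have subst1_disjoint j : j \in S -> forall U W, minimal (subst1 G j) U ->
    minimal (subst1 G j) W -> U != W -> [disjoint U & W].
  move=> jS; apply: (@complete_intersection_minimal_disjoint k).
  by rewrite /subst1 -map_comp; apply: ci_subst1; exists S.
exists (ideal_of (map (@mono k n) (minimals (colon_gens G S)))); split.
- exact: ideal_of_is_ideal.
- apply: disjoint_complete_intersection; first exact: minimals_uniq.
  exact: colon_minimal_disjoint.
- move=> p; rewrite mono_ideal_cap.
  by split=> -[q Iq ->]; exists q; rewrite // -ideal_of_minimals mono_idealP in Iq *.
Qed.
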